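(* Consider a single-relay network with no direct source–destination link. Let $q$ be a prime power, $K\ge1$, $N_{\mathrm S}\ge K$, $N_{\mathrm R}\ge 1$. A source S draws $N_{\mathrm S}$ coefficient vectors i.i.d. uniformly from $\mathbb{F}_q^K$ and sends one packet per vector to a relay R, each packet erased independently with probability $\epsilon_{\mathrm{SR}}$ (independently of the coefficients); the destination D receives nothing from S. R, having received $m_1$ packets with coefficient matrix $\mathbf{C}_{\mathrm S\to\mathrm R}\in\mathbb{F}_q^{m_1\times K}$, draws $\mathbf{G}\in\mathbb{F}_q^{N_{\mathrm R}\times m_1}$ with i.i.d. uniform entries and transmits the $N_{\mathrm R}$ rows of $\mathbf{G}\mathbf{C}_{\mathrm S\to\mathrm R}$ to D, each erased independently with probability $\epsilon_{\mathrm{RD}}$. Decoding succeeds iff the received recoded coefficient vectors span a space of rank $K$. Then the probability of successful decoding equals $$P^{(1)}_{\mathrm R}=P(N_{\mathrm S},\epsilon_{\mathrm{SR}})\,P(N_{\mathrm R},\epsilon_{\mathrm{RD}}),\qquad\text{where } P(N,\epsilon)=\sum_{k=K}^{N}\binom{N}{k}(1-\epsilon)^k\epsilon^{N-k}\prod_{i=0}^{K-1}\left(1-q^{i-k}\right),$$ with $P(N,\epsilon):=0$ if $N<K$.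
   Context: $P(N,\epsilon)$ is the probability that, of $N$ packets carrying i.i.d. uniform coefficient vectors in $\mathbb{F}_q^K$ each independently erased with probability $\epsilon$, the received ones have rank $K$. *)

From HB Require Import structures.
From mathcomp Require Import all_boot all_order all_algebra all_field.
Set Implicit Arguments. Unset Strict Implicit. Unset Printing Implicit Defensive.
Import Order.TTheory GRing.Theory Num.Theory.
Local Open Scope ring_scope.

(* Probability that a given set S of the N packets (indices 'I_N) is exactly
   the set of received (non-erased) packets, erasures i.i.d. with prob. eps. *)
Definition erasure_w (R : pzRingType) (eps : R) (N : nat) (S : {set 'I_N}) : R :=
  (1 - eps) ^+ #|S| * eps ^+ (N - #|S|).

(* The paper's P(N, eps) for a field of size q and dimension K;
   the sum is empty (= 0) when N < K. *)
Definition Psucc (R : fieldType) (q K N : nat) (eps : R) : R :=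
  \sum_(K <= k < N.+1)
     'C(N, k)%:R * (1 - eps) ^+ k * eps ^+ (N - k)
     * \prod_(i < K) (1 - ((q%:R) ^+ (k - i))^-1).

(* Coefficient matrix received at D:
   C  : source coefficient vectors (row i = vector of packet i),
   S1 : set of source packets received at R,
   G  : relay recoding coefficients; only the columns indexed by S1 are used
        (the entries G j i, i in S1, are i.i.d. uniform, i.e. an N_R x m1 uniform
        matrix applied to the received rows C_{S->R}),
   S2 : set of recoded packets received at D.
   Row j is the recoded vector (G C_{S->R})_j if j in S2, and 0 otherwise
   (zero rows do not change the rank of the received span). *)
Definition received_mx (F : fieldType) (K NS NR : nat)
    (C : 'M[F]_(NS, K)) (S1 : {set 'I_NS}) (G : 'M[F]_(NR, NS))
    (S2 : {set 'I_NR}) : 'M[F]_(NR, K) :=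
  \matrix_(j < NR, k < K)
     (if j \in S2 then \sum_(i in S1) G j i * C i k else 0).

Definition relay_success_prob (R : realFieldType) (F : finFieldType)
    (K NS NR : nat) (eSR eRD : R) : R :=
  \sum_(C : 'M[F]_(NS, K)) \sum_(G : 'M[F]_(NR, NS))
  \sum_(S1 : {set 'I_NS}) \sum_(S2 : {set 'I_NR})
     ((#|F|%:R) ^+ (NS * K))^-1 * ((#|F|%:R) ^+ (NR * NS))^-1
     * erasure_w eSR S1 * erasure_w eRD S2
     * (\rank (received_mx C S1 G S2) == K)%:R.

From HB Require Import structures.
From mathcomp Require Import all_boot all_order all_algebra all_field.
From mathcomp Require Import zify ring.
Set Implicit Arguments. Unset Strict Implicit. Unset Printing Implicit Defensive.
Import Order.TTheory GRing.Theory Num.Theory.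
Local Open Scope ring_scope.

(* Transposing, the received matrix has rank K exactly when A D1 X D2 is row
   free, where A = C^T and X = G^T are uniform and D1, D2 are the 0/1 diagonal
   matrices of the two erasure patterns.  This forces B = A D1 to be row free;
   X |-> B X is then a surjective linear map, so B X is again uniform and the
   event splits into "A D1 is row free" and "Z D2 is row free" for a uniform
   K x NR matrix Z.  A uniform K x n matrix A makes A Y row free with
   probability prod_(i < K) (1 - q^(i - rank Y)): row by row, the new row must
   avoid the preimage of the span of the previous ones, which has
   q^(n - rank Y + i) elements.  Grouping the erasure patterns by size yields
   the binomial sums P(N, eps). *)

Section AdditiveFibers.
Variables U V : finZmodType.

Lemma card_additive_fiber (f : {additive U -> V}) u :
  #|f @^-1: [set f u]| = #|f @^-1: [set 0]|.
Proof.
rewrite -[RHS](card_imset _ (addrI u)); apply: eq_card => x; rewrite !inE.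
apply/eqP/imsetP => [fx | [k]].
  by exists (x - u); [rewrite !inE raddfB fx subrr | rewrite addrC subrK].
by rewrite !inE => /eqP fk ->; rewrite raddfD fk addr0.
Qed.

Lemma card_preimset_additive (f : {additive U -> V}) (T : {set V}) :
  {subset T <= codom f} -> #|f @^-1: T| = (#|T| * #|f @^-1: [set 0%R]|)%N.
Proof.
move=> sTf; rewrite -sum_nat_const -sum1_card.
rewrite (partition_big f (mem T)) => [|x]; last by rewrite inE.
apply: eq_bigr => w Tw; have /codomP[u fu] := sTf w Tw.
rewrite fu -(card_additive_fiber f u) -sum1_card; apply: eq_bigl => x.
by rewrite !inE -fu; apply: andb_idl => /eqP->.
Qed.

End AdditiveFibers.

Lemma row_free_col_mx_rV (F : fieldType) k n (w : 'rV[F]_n) (B : 'M_(k, n)) :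
  row_free (col_mx w B) = row_free B && ~~ (w <= B)%MS.
Proof.
rewrite /row_free -addsmxE addsmxC; have leB := rank_leq_row B.
have [wB | nwB] := boolP (w <= B)%MS.
  by rewrite andbF (addsmx_idPl wB); apply/negbTE; lia.
have [le_Bw _] := mxrank_adds_leqif B w; have := rank_leq_row w.
have : (\rank B < \rank (B + w))%N.
  by rewrite rank_ltmx // ltmxE addsmxSl (contra (submx_trans (addsmxSr B w))).
by rewrite andbT; lia.
Qed.

Section DiagSet.
Variable F : fieldType.

Lemma mxrank_diag_mx n (d : 'rV[F]_n) :
  \rank (diag_mx d) = #|[pred i | d 0 i != 0]|.
Proof.
set P := [pred i | d 0 i != 0].
have /mxdirectP/= dsum := @mxdirect_delta F _ P n id (in2W (@inj_id _)).
have -> : #|P| = \rank (\sum_(i | P i) <<delta_mx 0 i : 'rV[F]_n>>)%MS.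
  by rewrite dsum -sum1_card; apply: eq_bigr => i _; rewrite mxrank_gen mxrank_delta.
apply/eqmx_rank/andP; split.
  apply/row_subP => i; rewrite row_diag_mx.
  have [Pi | /negPn/eqP->] := boolP (P i); last by rewrite scale0r sub0mx.
  by rewrite scalemx_sub // (sumsmx_sup i) // genmxE.
apply/sumsmx_subP => i Pi; rewrite genmxE.
by rewrite -(scalerK Pi (delta_mx 0 i)) scalemx_sub // -row_diag_mx row_sub.
Qed.

Definition diag_set_mx n (S : {set 'I_n}) : 'M[F]_n :=
  diag_mx (\row_i (i \in S)%:R).

Lemma mxrank_diag_set_mx n (S : {set 'I_n}) : \rank (diag_set_mx S) = #|S|.
Proof.
rewrite mxrank_diag_mx; apply: eq_card => i; rewrite !inE mxE.
by case: (i \in S); rewrite ?oner_eq0 ?eqxx.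
Qed.

End DiagSet.

Section Counting.
Variable F : finFieldType.
Local Notation q := #|F|.

Lemma card_submx k n (M : 'M[F]_(k, n)) :
  #|[set w : 'rV_n | (w <= M)%MS]| = (q ^ \rank M)%N.
Proof.
have -> : [set w : 'rV_n | (w <= M)%MS] = [set u *m row_base M | u in 'rV_(\rank M)].
  apply/setP => w; rewrite inE -(eq_row_base M).
  by apply/submxP/imsetP => [[u ->] | [u _ ->]]; exists u.
by rewrite card_imset ?card_mx ?mul1n //; apply/row_free_inj/row_base_free.
Qed.

Lemma card_kermx n p (Y : 'M[F]_(n, p)) :
  #|[set v : 'rV_n | v *m Y == 0]| = (q ^ (n - \rank Y))%N.
Proof.
by rewrite -mxrank_ker -card_submx; apply: eq_card => v; rewrite !inE sub_kermx.
Qed.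

Lemma card_mulmxr_sub n p (Y : 'M[F]_(n, p)) k (M : 'M_(k, p)) : (M <= Y)%MS ->
  #|[set v : 'rV_n | (v *m Y <= M)%MS]| = (q ^ (n - \rank Y + \rank M))%N.
Proof.
move=> sMY; have -> : [set v : 'rV_n | (v *m Y <= M)%MS]
    = mulmxr Y @^-1: [set w : 'rV_p | (w <= M)%MS] by apply/setP => v; rewrite !inE.
rewrite card_preimset_additive ?card_submx.
  rewrite expnD mulnC -(card_kermx Y); congr (_ * _)%N.
  by apply: eq_card => v; rewrite !inE.
move=> w; rewrite inE => /submx_trans/(_ sMY)/submxP[u ->].
exact: (codom_f (mulmxr Y)).
Qed.

Lemma card_mulmx_row_free k m p (B : 'M[F]_(k, m)) (P : pred 'M[F]_(k, p)) :
  row_free B ->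
  (#|[set X : 'M_(m, p) | P (B *m X)]| * q ^ (k * p)
     = #|[set Z | P Z]| * q ^ (m * p))%N.
Proof.
case/row_freeP=> B' BB'.
have onto (T : {set 'M[F]_(k, p)}) : {subset T <= codom (@mulmx F k m p B)}.
  by move=> Z _; rewrite -[Z]mul1mx -BB' -mulmxA codom_f.
have := card_preimset_additive (onto setT); rewrite cardsT card_mx.
have -> : @mulmx F k m p B @^-1: setT = setT by apply/setP => X; rewrite !inE.
rewrite cardsT card_mx => ->.
have -> : [set X | P (B *m X)] = @mulmx F k m p B @^-1: [set Z | P Z].
  by apply/setP => X; rewrite !inE.
by rewrite card_preimset_additive // -mulnA; congr (_ * _)%N; apply: mulnC.
Qed.

Lemma card_row_free_mulmx n p (Y : 'M[F]_(n, p)) K :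
  #|[set A : 'M_(K, n) | row_free (A *m Y)]|
    = (\prod_(i < K) (q ^ n - q ^ (n - \rank Y + i)))%N.
Proof.
elim: K => [|K IH].
  rewrite big_ord0 (_ : [set A | _] = setT) ?cardsT ?card_mx //.
  by apply/setP => A; rewrite !inE /row_free -leqn0 rank_leq_row.
rewrite big_ord_recr -IH /= -sum_nat_const -sum1_card -[K.+1]/(1 + K)%N.
set rf := [set A' : 'M_(K, n) | row_free (A' *m Y)].
rewrite (partition_big dsubmx [in rf]) => [|A]; last first.
  by rewrite !inE -{1}(vsubmxK A) mul_col_mx row_free_col_mx_rV => /andP[].
apply: eq_bigr => A'; rewrite inE => rfA'.
rewrite (reindex (col_mx^~ A')) /=; last first.
  exists usubmx => [v _ | A /andP[_ /eqP <-]]; first by rewrite col_mxKu.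
  by rewrite vsubmxK.
transitivity #|~: [set v : 'rV_n | (v *m Y <= A' *m Y)%MS]|.
  rewrite -sum1_card; apply: eq_bigl => v.
  by rewrite !inE col_mxKd eqxx andbT mul_col_mx row_free_col_mx_rV rfA'.
by rewrite cardsCs setCK card_mx mul1n card_mulmxr_sub ?submxMl // (eqP rfA').
Qed.

End Counting.

Lemma sumr_bool_card (R : pzSemiRingType) (T : finType) (P : pred T) :
  \sum_(x : T) (P x)%:R = #|[set x | P x]|%:R :> R.
Proof.
rewrite -sum1_card natr_sum [RHS]big_mkcond; apply: eq_bigr => x _.
by rewrite inE; case: (P x).
Qed.

Definition row_free_prob (R : fieldType) (q K m : nat) : R :=
  \prod_(i < K) (1 - ((q%:R : R) ^+ (m - i))^-1).

Lemma row_free_prob_eq0 (R : fieldType) q K m :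
  (m < K)%N -> row_free_prob R q K m = 0.
Proof.
move=> ltmK; rewrite /row_free_prob (bigD1 (Ordinal ltmK)) //=.
by rewrite subnn invr1 subrr mul0r.
Qed.

Lemma natr_prod_subn_expn (R : numFieldType) q n r K : (0 < q)%N -> (r <= n)%N ->
  (\prod_(i < K) (q ^ n - q ^ (n - r + i)))%:R
    = (q%:R ^+ n) ^+ K * row_free_prob R q K r :> R.
Proof.
move=> q_gt0 le_rn; rewrite natr_prod.
have -> : (q%:R ^+ n) ^+ K = \prod_(i < K) q%:R ^+ n :> R.
  by rewrite prodr_const card_ord.
rewrite /row_free_prob -big_split /=.
apply: eq_bigr => i _; have [lt_ir | le_ri] := ltnP i r; last first.
  have /eqP-> : (q ^ n - q ^ (n - r + i) == 0)%N.
    by rewrite subn_eq0 leq_pexp2l //; lia.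
  by rewrite (eqP le_ri) invr1 subrr mulr0.
have q0 : q%:R != 0 :> R by rewrite pnatr_eq0 -lt0n.
rewrite natrB ?leq_pexp2l //; last by lia.
set m := (n - r + i)%N; have -> : n = (m + (r - i))%N by rewrite /m; lia.
rewrite !natrX exprD; field.
by rewrite expf_neq0.
Qed.

Lemma natr_card_neq0 (R : numDomainType) (F : finNzRingType) : #|F|%:R != 0 :> R.
Proof. by rewrite pnatr_eq0 -lt0n (ltnW (card_finNzRing_gt1 F)). Qed.

Section UniformCounts.
Variables (R : numFieldType) (F : finFieldType).
Local Notation q := #|F|.

Lemma card_row_free_mul_diag_set K n (S : {set 'I_n}) :
  #|[set A : 'M[F]_(K, n) | row_free (A *m diag_set_mx F S)]|%:R
    = q%:R ^+ (n * K) * row_free_prob R q K #|S| :> R.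
Proof.
rewrite card_row_free_mulmx mxrank_diag_set_mx exprM natr_prod_subn_expn //.
  exact: ltnW (card_finNzRing_gt1 F).
by rewrite -[n in (_ <= n)%N]card_ord max_card.
Qed.

Lemma sum_row_free_mulmx_diag_set K m p (A : 'M[F]_(K, m)) (S : {set 'I_p}) :
  \sum_(X : 'M[F]_(m, p)) (row_free (A *m X *m diag_set_mx F S))%:R
    = (row_free A)%:R * (q%:R ^+ (m * p) * row_free_prob R q K #|S|) :> R.
Proof.
rewrite sumr_bool_card; have [rfA | nrfA] := boolP (row_free A); last first.
  rewrite mul0r (_ : [set X | _] = set0) ?cards0 //; apply/setP => X; rewrite !inE.
  apply: contraNF nrfA; rewrite /row_free !eqn_leq !rank_leq_row /= => rkK.
  exact: leq_trans rkK (leq_trans (mxrankM_maxl _ _) (mxrankM_maxl _ _)).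
have q0 := natr_card_neq0 R F.
have := card_mulmx_row_free (fun Z => row_free (Z *m diag_set_mx F S)) rfA.
move/(congr1 (fun k => k%:R : R)); rewrite !natrM card_row_free_mul_diag_set.
rewrite (mulnC K p) natrX => /(canRL (mulfK (expf_neq0 _ q0))) ->.
by rewrite mul1r natrX; field; rewrite expf_neq0.
Qed.

End UniformCounts.

Lemma received_mxE (F : fieldType) K NS NR (C : 'M[F]_(NS, K)) S1
    (G : 'M[F]_(NR, NS)) S2 :
  received_mx C S1 G S2 = diag_set_mx F S2 *m G *m diag_set_mx F S1 *m C.
Proof.
apply/matrixP => j k; rewrite /diag_set_mx mul_diag_mx mul_mx_diag !mxE.
under [RHS]eq_bigr do rewrite !mxE.
case: (j \in S2); last by rewrite big1 // => i _; rewrite !mul0r.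
rewrite big_mkcond; apply: eq_bigr => i _.
by case: (i \in S1); rewrite ?mul1r ?mulr1 ?mulr0 ?mul0r.
Qed.

Lemma mxrank_received_mx (F : fieldType) K NS NR (C : 'M[F]_(NS, K)) S1
    (G : 'M[F]_(NR, NS)) S2 :
  \rank (received_mx C S1 G S2)
    = \rank (C^T *m diag_set_mx F S1 *m G^T *m diag_set_mx F S2).
Proof.
by rewrite received_mxE -mxrank_tr !trmx_mul !tr_diag_mx !mulmxA.
Qed.

Lemma sum_received_full_rank (R : numFieldType) (F : finFieldType) K NS NR
    (S1 : {set 'I_NS}) (S2 : {set 'I_NR}) :
  \sum_(C : 'M[F]_(NS, K)) \sum_(G : 'M[F]_(NR, NS))
     (\rank (received_mx C S1 G S2) == K)%:R
  = #|F|%:R ^+ (NS * K) * #|F|%:R ^+ (NR * NS)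
      * row_free_prob R #|F| K #|S1| * row_free_prob R #|F| K #|S2| :> R.
Proof.
rewrite (reindex trmx) /=; last by exists trmx => X _; rewrite trmxK.
under eq_bigr => A _.
  rewrite (reindex trmx) /=; last by exists trmx => X _; rewrite trmxK.
  under eq_bigr do rewrite mxrank_received_mx !trmxK -/(row_free _).
  rewrite sum_row_free_mulmx_diag_set.
  over.
by rewrite -mulr_suml sumr_bool_card card_row_free_mul_diag_set (mulnC NR NS); ring.
Qed.

Lemma sum_erasure_w_card (R : comPzRingType) (e : R) N (f : nat -> R) :
  \sum_(S : {set 'I_N}) erasure_w e S * f #|S|
    = \sum_(k < N.+1) 'C(N, k)%:R * (1 - e) ^+ k * e ^+ (N - k) * f k.
Proof.
have le_SN (S : {set 'I_N}) : (#|S| < N.+1)%N.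
  by rewrite ltnS -[N in (_ <= N)%N]card_ord max_card.
rewrite (partition_big (fun S : {set 'I_N} => Ordinal (le_SN S)) predT) //=.
apply: eq_bigr => k _.
rewrite (eq_bigr (fun=> (1 - e) ^+ k * e ^+ (N - k) * f k)) => [|S /eqP <- //].
rewrite sumr_const -!mulrA mulr_natl; congr (_ *+ _).
rewrite -[N in 'C(N, _)]card_ord -card_draws.
by apply: eq_card => S; rewrite inE unfold_in.
Qed.

Lemma PsuccE (R : fieldType) q K N (e : R) :
  Psucc q K N e
    = \sum_(k < N.+1) 'C(N, k)%:R * (1 - e) ^+ k * e ^+ (N - k) * row_free_prob R q K k.
Proof.
rewrite /Psucc big_geq_mkord [RHS](bigID (fun k : 'I_N.+1 => K <= k)%N) /=.
rewrite [X in _ = _ + X]big1 ?addr0 // => k; rewrite -ltnNge => /row_free_prob_eq0->.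
by rewrite mulr0.
Qed.

Theorem mainTheorem5 (R : realFieldType) (F : finFieldType)
    (K NS NR : nat) (eSR eRD : R) :
  (1 <= K)%N -> (K <= NS)%N -> (1 <= NR)%N ->
  0 <= eSR <= 1 -> 0 <= eRD <= 1 ->
  relay_success_prob F K NS NR eSR eRD =
    Psucc #|F| K NS eSR * Psucc #|F| K NR eRD.
Proof.
(* The identity holds without any of the side conditions. *)
move=> _ _ _ _ _.
rewrite /relay_success_prob !PsuccE -!sum_erasure_w_card big_distrlr /=.
under eq_bigr do under eq_bigr do rewrite pair_big /=.
rewrite pair_big exchange_big [RHS]pair_big /=.
apply: eq_bigr => -[S1 S2] _ /=.
rewrite -mulr_sumr -(pair_big predT predT (fun C G =>
  (\rank (received_mx C S1 G S2) == K)%:R)) /= sum_received_full_rank.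
by field; rewrite !expf_neq0 ?natr_card_neq0.
Qed.
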